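(* Consider an autonomous system $\dot{\bm z}=X(\bm z)$, $X:\mathbb{C}^n\to\mathbb{C}^n$, a non-trivial solution $\phi(t)$ of it, and $t_0$ such that $X_i(\phi(t_0))\neq 0$ for some index $i$. Write $A_0:=X(\phi(t_0))$, $X_i^0:=X_i(\phi(t_0))$, and for $j\ge 1$ let $A_j:=X^{(j)}(\phi(t_0))$ be the lexicographically ordered matrix of all order-$j$ partial derivatives of $X$ evaluated at $\phi(t_0)$ (an $n\times d_{n,j}$ matrix, $d_{n,j}=\binom{n+j-1}{n-1}$). Define the constant matrices $F_1:=\mathrm{Id}_n-\frac{1}{X_i^0}\left(A_0\odot \bm{e}_i^T\right)$ and, for $k\ge 2$, $F_{k}=-\frac{1}{X^0_i} \left[\sum_{j=0}^{k-2}\binom{k-1}{j}F_{j+1}\left(A_{k-j-1}\odot \mathrm{Id}_n^{\odot j}\right)\right] U_k$, where $U_k=\left[\sum_{j=0}^{k-1} \binom{k}{j+1} (-1)^{j} (\mathrm{Id}_n - F_1)^{\odot j} \odot \mathrm{Id}_n^{\odot k-1-j}\right]\odot \bm{e}_i^T = \left[\bigodot_{j=1}^{k-1}(\mathrm{Id}_n-\zeta_k^jF_1)\right]\odot \bm{e}_i^T$, with $\zeta_k=\exp(2\pi \mathrm{i}/k)$. Then for every $k\ge 1$, $F_k\left(A_0\odot \mathrm{Id}_n^{\odot k-1}\right) + \binom{k-1}{1} F_{k-1}\left(A_1\odot \mathrm{Id}_n^{\odot k-2}\right) + \dots + \binom{k-1}{k-2} F_{2}\left(A_{k-2}\odot \mathrm{Id}_n\right)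 + F_{1}A_{k-1} =0,$ i.e. the conjectured filter matrix $\Phi=\exp_\odot(\cdots\mid F_3\mid F_2\mid F_1)$ satisfies the admissibility (kernel) condition at $t=t_0$ for every order $k\ge1$.
   Context: Here $\odot$ denotes Bekbaev's symmetric product of matrices: a matrix in $\mathrm{Mat}^{i,j}_{n}$ is identified with a linear map $\mathrm{Sym}^j K^n\to\mathrm{Sym}^i K^n$ (a $d_{n,i}\times d_{n,j}$ matrix), and $A\odot B$ acts on symmetric monomials $\bm{e}_1^{\odot k_1}\cdots\bm{e}_n^{\odot k_n}$ by $\frac{1}{\binom{j_1+j_2}{j_1}}\sum_{\mathbf p}\binom{\mathbf k}{\mathbf p}A(\bm e^{\odot\mathbf p})\odot B(\bm e^{\odot(\mathbf k-\mathbf p)})$, behaving like multiplication of homogeneous polynomials; powers $^{\odot k}$ are built from it, and $\exp_\odot A=\sum_{i\ge0}\frac{1}{i!}A^{\odot i}$. $\bm e_i$ is the $i$-th canonical basis vector of $K^n$. The displayed identity is the condition that the lower block of the (conjectural) filter matrix, applied to the inverse fundamental matrix of the linearized higher variational system, yields admissible solutions of the dual (adjoint) variational system, i.e. jets of formal first integrals; the statement proves this condition only at the initial time $t_0$, the full conjecture remaining open. *)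

(* Bekbaev's symmetric matrices are represented as linear maps between      *)
(* spaces of homogeneous polynomials: a matrix of Mat^{r,c}_n (size         *)
(* d_{n,r} x d_{n,c}) is a function M : 'X_{1..n} -> {mpoly K[n]} sending   *)
(* the column monomial m (= e_1^{.k_1}...e_n^{.k_n}, mdeg m = c) to the     *)
(* column M m, a homogeneous polynomial of degree r whose coefficient at    *)
(* the row monomial r' is the entry (r', m).  Only the values on monomials  *)
(* of degree c are meaningful; all operations below only ever evaluate a   *)
(* matrix on monomials of its column degree.                               *)
From HB Require Import structures.
From mathcomp Require Import all_boot all_order all_algebra.
From mathcomp Require Import mpoly.

Set Implicit Arguments.
Unset Strict Implicit.
Unset Printing Implicit Defensive.

Import Order.TTheory GRing.Theory.
Local Open Scope ring_scope.

Section SymMatrices.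
Variables (K : fieldType) (n : nat).

Definition smat := 'X_{1..n} -> {mpoly K[n]}.

Definition mbin (k p : 'X_{1..n}) : nat := (\prod_(l < n) 'C(k l, p l))%N.

Definition smul (A B : smat) : smat :=
  fun m => \sum_(r <- msupp (B m)) (B m)@_r *: A r.

(* Bekbaev's symmetric product A (.) B, where jA is the column degree of A;
   on a monomial k of degree j = jA + jB:
   (A . B) e^k = 1/C(j,jA) sum_{p <= k, |p| = jA} binom(k,p) A(e^p) (.) B(e^(k-p)),
   the product (.) of symmetric vectors being the product of polynomials. *)
Definition sprod (jA : nat) (A B : smat) : smat :=
  fun k => ('C(mdeg k, jA))%:R^-1 *:
    \sum_(p : 'X_{1..n < (mdeg k).+1} | ((p <= k)%MM && (mdeg p == jA)))
       (mbin k p)%:R *: (A p * B (k - p)%MM).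

Definition sunit : smat := fun m => (m == 0%MM)%:R.

Fixpoint spow (jA : nat) (A : smat) (k : nat) : smat :=
  match k with
  | 0 => sunit
  | k'.+1 => sprod jA A (spow jA A k')
  end.

Definition sid : smat := fun m => 'X_[m].

Definition seT (i : 'I_n) : smat := fun m => (m == U_(i)%MM)%:R.

Definition sadd (A B : smat) : smat := fun m => A m + B m.
Definition ssub (A B : smat) : smat := fun m => A m - B m.
Definition sscale (c : K) (A : smat) : smat := fun m => c *: A m.
Definition szero : smat := fun _ => 0.

(* The data: A j = A_j in Mat^{1,j} (A 0 = A_0 = X(phi(t0)) in Mat^{1,0}),
   i the chosen index, X_i^0 = (A 0 0)@_(U_(i)). *)
Section Filter.
Variables (A : nat -> smat) (i : 'I_n).

Definition Xi0 : K := (A 0%N 0%MM)@_(U_(i)%MM).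

Definition F1 : smat := ssub sid (sscale Xi0^-1 (sprod 0 (A 0%N) (seT i))).

Definition Umat (k : nat) : smat :=
  sprod k.-1
    (fun m => \sum_(j < k) ('C(k, j.+1))%:R * (-1) ^+ j *:
        sprod j (spow 1 (ssub sid F1) j) (spow 1 sid (k.-1 - j)%N) m)
    (seT i).

(* F_k for k >= 2, given the previously computed G j = F_j (j < k):
   F_k = -1/X_i^0 [sum_{j=0}^{k-2} C(k-1,j) F_{j+1} (A_{k-j-1} (.) Id^{(.)j})] U_k *)
Definition Fstep (G : nat -> smat) (k : nat) : smat :=
  sscale (- Xi0^-1)
    (smul (fun m => \sum_(j < k.-1)
              ('C(k.-1, j))%:R *: smul (G j.+1) (sprod (k.-1 - j)%N (A (k.-1 - j)%N) (spow 1 sid j)) m)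
          (Umat k)).

(* strong recursion through a fuel argument: Faux fuel k = F_k whenever k <= fuel *)
Fixpoint Faux (fuel : nat) (k : nat) : smat :=
  match fuel with
  | 0 => szero
  | fuel'.+1 =>
      if k == 0%N then szero
      else if k == 1%N then F1
      else Fstep (Faux fuel') k
  end.

Definition F (k : nat) : smat := Faux k k.

End Filter.
End SymMatrices.

(* Read a matrix [M : smat K n] as the linear map [sapply M] on polynomials.
   The last term of the sum is [F_k (A_0 X^m)], and [F_k = -1/X_i^0 R_k U_k]
   where [R_k] is the sum of the other terms, so everything reduces to
   [U_k (A_0 X^m) = X_i^0 X^m].  Let [b = A_0 / X_i^0]; then [Id - F_1] sends
   [e_l] to [delta_il b], and let [sigma] be the substitution [X_i |-> X_i - b]
   (i.e. [X_l |-> F_1 e_l]).  On a monomial [X^r] of degree [k] the factor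
   [e_i^T] of [U_k] keeps only the [X^(r - e_i)] column of the bracket, and
   the binomial theorem turns its alternating sum into
   [A_0 U_k X^r = X_i^0 (X^r - sigma X^r)].  Since [sigma] is multiplicative
   and [sigma A_0 = F_1 A_0 = 0], this gives
   [A_0 U_k (A_0 X^m) = X_i^0 A_0 X^m], and [A_0] cancels. *)

From HB Require Import structures.
From mathcomp Require Import all_boot all_order all_algebra.
From mathcomp Require Import ssrcomplements mpoly bigenough ring.
Set Implicit Arguments.
Unset Strict Implicit.
Unset Printing Implicit Defensive.
Import GRing.Theory Num.Theory BigEnough.
Local Open Scope ring_scope.

Section SymApply.
Variables (K : fieldType) (n : nat).
Implicit Types (M N : smat K n) (P : {mpoly K[n]}).

Definition sapply M P : {mpoly K[n]} := \sum_(r <- msupp P) P@_r *: M r.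

Lemma smulE M N m : smul M N m = sapply M (N m).
Proof. by []. Qed.

Lemma sapplywE M P b : (msize P <= b)%N ->
  sapply M P = \sum_(r : 'X_{1..n < b}) P@_r *: M r.
Proof.
pose I : subFinType _ := 'X_{1..n < b}.
move=> le_Pb; rewrite /sapply (big_mksub I) /=; first last.
- by move=> r /msize_mdeg_lt/leq_trans/(_ le_Pb).
- by rewrite msupp_uniq.
by rewrite big_rmcond //= => r /memN_msupp_eq0 ->; rewrite scale0r.
Qed.

Lemma sapply_is_linear M : linear (sapply M).
Proof.
move=> c P Q; pose_big_enough b; first rewrite !(sapplywE _ (b := b)) //.
  rewrite scaler_sumr -big_split /=; apply/eq_bigr => r _.
  by rewrite mcoeffD mcoeffZ scalerDl scalerA.
by close.
Qed.

HB.instance Definition _ M := GRing.isLinear.Build K {mpoly K[n]} {mpoly K[n]}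
  _ (sapply M) (sapply_is_linear M).

Lemma eq_in_sapply M N P : {in msupp P, M =1 N} -> sapply M P = sapply N P.
Proof.
by move=> eqMN; rewrite /sapply !big_seq; apply: eq_bigr => r /eqMN ->.
Qed.

Lemma sapplyX M m : sapply M 'X_[m] = M m.
Proof. by rewrite /sapply msuppX big_seq1 mcoeffX eqxx scale1r. Qed.

Lemma sapply_sid P : sapply (@sid K n) P = P.
Proof. by rewrite {2}[P]mpolyE. Qed.

Lemma sapply_mmap1 (h : 'I_n -> {mpoly K[n]}) P :
  sapply (mmap1 h) P = mmap (@mpolyC n K) h P.
Proof. by apply: eq_bigr => r _; rewrite mul_mpolyC. Qed.

Lemma sapply_dhomog1 M P : P \is 1.-homog ->
  sapply M P = mmap (@mpolyC n K) (fun l => M U_(l)%MM) P.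
Proof.
move=> homP; rewrite -sapply_mmap1; apply: eq_in_sapply => r /(dhomog_mf homP).
by move/eqP/mdeg1P => [l /eqP ->]; rewrite mmap1U.
Qed.

Lemma sapply_seT (i : 'I_n) P : sapply (seT K i) P = P@_U_(i) *: 1.
Proof.
rewrite {2}[P]mpolyE raddf_sum /= scaler_suml; apply: eq_bigr => r _.
rewrite /seT mcoeffZ mcoeffX eq_sym.
by case: eqP; rewrite ?mulr1 ?mulr0 ?scale0r ?scaler0.
Qed.

Lemma sapply_ssub M N P : sapply (ssub M N) P = sapply M P - sapply N P.
Proof. by rewrite /sapply -sumrB; apply: eq_bigr => r _; rewrite scalerBr. Qed.

Lemma sapply_sscale c M P : sapply (sscale c M) P = c *: sapply M P.
Proof.
by rewrite /sapply scaler_sumr; apply: eq_bigr => r _; rewrite scalerA mulrC -scalerA.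
Qed.

Lemma sapply_mull Q M P : sapply (fun r => Q * M r) P = Q * sapply M P.
Proof. by rewrite /sapply mulr_sumr; apply: eq_bigr => r _; rewrite scalerAr. Qed.

Lemma sapply_smul M N P : sapply (smul M N) P = sapply M (sapply N P).
Proof.
by rewrite [RHS]linear_sum; apply: eq_bigr => r _; rewrite linearZ.
Qed.

End SymApply.

Section MonomialCombinatorics.
Variable n : nat.
Implicit Types (k m p : 'X_{1..n}).

Lemma mdegB_eq p k : (p <= k)%MM -> mdeg (k - p) = (mdeg k - mdeg p)%N.
Proof. by move=> le_pk; rewrite -{2}(submK le_pk) mdegD addnK. Qed.

Lemma subKm p k : (p <= k)%MM -> (k - (k - p) = p)%MM.
Proof. by move=> le_pk; rewrite submBA // addmC addmK. Qed.

Lemma lep_mulmn1 (l : 'I_n) j k : ((U_(l) *+ j)%MM <= k)%MM = (j <= k l)%N.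
Proof.
apply/mnm_lepP/idP => [/(_ l)|le_jk l']; first by rewrite mulmnE mnm1E eqxx mul1n.
by rewrite mulmnE mnm1E; case: eqP => [<-|]; rewrite ?mul1n ?mul0n.
Qed.

Lemma mnm_mulmn1_mdeg (i : 'I_n) m :
  (forall l, l != i -> m l = 0%N) -> m = (U_(i) *+ mdeg m)%MM.
Proof.
move=> m0; apply/mnmP => l; rewrite mulmnE mnm1E.
have [<-|ne_il] := eqVneq i l; last by rewrite mul0n m0 // eq_sym.
by rewrite mul1n mdegE (bigD1 i) //= big1 ?addn0.
Qed.

Lemma mbin0 k : mbin k 0%MM = 1%N.
Proof. by rewrite /mbin big1 // => l _; rewrite mnm0E bin0. Qed.

Lemma mbin_mulmn1 k (l : 'I_n) j : mbin k (U_(l) *+ j)%MM = 'C(k l, j).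
Proof.
rewrite /mbin (bigD1 l) //= mulmnE mnm1E eqxx mul1n big1 ?muln1 // => l' ne_l'l.
by rewrite mulmnE mnm1E eq_sym (negbTE ne_l'l) mul0n bin0.
Qed.

Lemma mbin1 k (l : 'I_n) : mbin k U_(l)%MM = k l.
Proof. by rewrite -[U_(l)%MM]mulm1n mbin_mulmn1 bin1. Qed.

Lemma mbin_sub k p : (p <= k)%MM -> mbin k (k - p)%MM = mbin k p.
Proof.
by move/mnm_lepP=> le_pk; apply: eq_bigr => l _; rewrite mnmBE bin_sub.
Qed.

Lemma big_bmnm_pred1 (V : zmodType) b (G : 'X_{1..n} -> V) m : (mdeg m < b)%N ->
  \sum_(p : 'X_{1..n < b} | bmnm p == m) G p = G m.
Proof. by move=> lt_mb; rewrite (big_pred1 (BMultinom lt_mb)). Qed.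

Lemma big_bmnm_reindex (V : zmodType) b (G : 'X_{1..n} -> V)
    (Q : pred 'X_{1..n}) (P : pred 'I_n) (f : 'I_n -> 'X_{1..n}) :
    {in P &, injective f} -> (forall l, P l -> mdeg (f l) < b)%N ->
    (forall p, Q p = [exists (l | P l), p == f l]) ->
  \sum_(p : 'X_{1..n < b} | Q p) G p = \sum_(l | P l) G (f l).
Proof.
move=> f_inj f_lt QE.
transitivity (\sum_(p : 'X_{1..n < b}) \sum_(l | P l) if bmnm p == f l then G p else 0).
  rewrite big_mkcond; apply: eq_bigr => p _ /=; rewrite QE.
  case: existsP => [[l /andP[Pl /eqP pl]] | Qn].
    rewrite (bigD1 l) //= pl eqxx big1 ?addr0 // => l' /andP[Pl' ne_l'l].
    by case: eqP => // /f_inj eq_ll'; rewrite eq_ll' ?eqxx in ne_l'l.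
  by rewrite big1 // => l Pl; case: eqP => // pl; case: Qn; exists l; rewrite Pl pl /=.
rewrite exchange_big; apply: eq_bigr => l Pl; rewrite -big_mkcond /=.
exact: big_bmnm_pred1 (f_lt l Pl).
Qed.

Lemma lep_mdeg1E k p :
  ((p <= k)%MM && (mdeg p == 1%N)) = [exists (l | k l != 0%N), p == U_(l)%MM].
Proof.
apply/andP/existsP => [[le_pk /mdeg1P[l /eqP pl]] | [l /andP[kl /eqP ->]]].
  by exists l; rewrite pl eqxx andbT -lep1mP -pl.
by rewrite lep1mP mdeg1.
Qed.

Lemma lep_mdeg_predE k p d : mdeg k = d.+1 ->
  ((p <= k)%MM && (mdeg p == d)) = [exists (l | k l != 0%N), p == k - U_(l)]%MM.
Proof.
move=> degk; apply/andP/existsP => [[le_pk /eqP degp] | [l /andP[kl /eqP ->]]].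
  have /mdeg1P[l /eqP kp] : mdeg (k - p)%MM == 1%N by rewrite mdegB_eq // degk degp subSnn.
  have le_lk : (U_(l) <= k)%MM by rewrite -kp lem_subr.
  by exists l; rewrite -(lep1mP l) le_lk -kp subKm ?eqxx.
by rewrite lem_subr mdegB_eq ?lep1mP // degk mdeg1 subn1.
Qed.

End MonomialCombinatorics.

Section MonomialEval.
Variables (R : comNzRingType) (n : nat) (h : 'I_n -> R).

Lemma mmap1_mulmn1 (i : 'I_n) j : mmap1 h (U_(i) *+ j)%MM = h i ^+ j.
Proof.
rewrite /mmap1 (bigD1 i) //= mulmnE mnm1E eqxx mul1n big1 ?mulr1 // => l ne_li.
by rewrite mulmnE mnm1E eq_sym (negbTE ne_li) mul0n expr0.
Qed.

Lemma mmap1_eq0 (m : 'X_{1..n}) l : h l = 0 -> m l != 0%N -> mmap1 h m = 0.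
Proof. by move=> hl ml; rewrite /mmap1 (bigD1 l) //= hl expr0n (negbTE ml) mul0r. Qed.

End MonomialEval.

Lemma exprBn_diff (R : comPzRingType) (x y : R) N k : (N <= k)%N ->
  x ^+ N - (x - y) ^+ N
  = \sum_(j < k) ('C(N, j.+1)%:R * (-1) ^+ j) * (y ^+ j.+1 * x ^+ (N - j.+1)).
Proof.
move=> le_Nk.
set G := fun j : nat => ('C(N, j.+1)%:R * (-1) ^+ j) * (y ^+ j.+1 * x ^+ (N - j.+1)).
have -> : \sum_(j < k) G j = \sum_(j < N) G j.
  rewrite (big_ord_widen _ G le_Nk) [RHS]big_mkcond; apply: eq_bigr => j _.
  case: ifP => // /negbT; rewrite -leqNgt -ltnS => /bin_small.
  by rewrite /G => ->; rewrite !mul0r.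
rewrite exprDn big_ord_recl /= subn0 expr0 mulr1 bin0 mulr1n opprD addrA subrr add0r.
rewrite -sumrN; apply: eq_bigr => j _.
by rewrite /bump /= add1n -mulr_natl [(- y) ^+ _]exprNn exprS /G; ring.
Qed.

Lemma natr_bin_shift (K : fieldType) k j r : [pchar K] =i pred0 ->
  (j <= k)%N -> (0 < r)%N ->
  (k.+1)%:R^-1 * r%:R * 'C(k.+1, j.+1)%:R / 'C(k, j)%:R * 'C(r.-1, j)%:R
  = 'C(r, j.+1)%:R :> K.
Proof.
move=> /pcharf0P natf_eq0 le_jk r_gt0.
have nzk : (k.+1)%:R != 0 :> K by rewrite natf_eq0.
have nzC : 'C(k, j)%:R != 0 :> K by rewrite natf_eq0 -lt0n bin_gt0.
have nzj : (j.+1)%:R != 0 :> K by rewrite natf_eq0.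
have binS m : 'C(m, j.+1)%:R = m%:R * 'C(m.-1, j)%:R / (j.+1)%:R :> K.
  by rewrite -natrM mul_bin_diag natrM mulrAC mulfV // mul1r.
by rewrite !binS /=; field; rewrite !(addrC 1) !natr1 nzj nzC nzk.
Qed.

Section SymProduct.
Variables (K : fieldType) (n : nat).
Implicit Types (L M : smat K n) (k r : 'X_{1..n}).

Lemma big_mnm_supp (V : lmodType K) k (G : 'I_n -> V) :
  \sum_(l | k l != 0%N) (k l)%:R *: G l = \sum_l (k l)%:R *: G l.
Proof.
rewrite [RHS](bigID (fun l => k l != 0%N)) /= [X in _ + X]big1 ?addr0 //.
by move=> l /negPn/eqP ->; rewrite scale0r.
Qed.

Lemma sprod0l L M k : sprod 0 L M k = L 0%MM * M k.
Proof.
rewrite /sprod bin0 invr1 scale1r.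
rewrite (eq_bigl (fun p : 'X_{1..n < _} => bmnm p == 0%MM)) => [|p] /=.
  by rewrite (big_bmnm_pred1 (fun q => (mbin k q)%:R *: (L q * M (k - q)%MM)))
    ?mdeg0 // mbin0 subm0 scale1r.
rewrite mdeg_eq0 andbC; case: eqP => // ->.
by apply/mnm_lepP => l; rewrite mnm0E.
Qed.

Lemma sprod_deg1l L M k : (0 < mdeg k)%N ->
  sprod 1 L M k = (mdeg k)%:R^-1 *: \sum_l (k l)%:R *: (L U_(l) * M (k - U_(l)))%MM.
Proof.
move=> k_gt0; rewrite /sprod bin1
  (big_bmnm_reindex (fun q => (mbin k q)%:R *: (L q * M (k - q)%MM))
  (Q := fun p => (p <= k)%MM && (mdeg p == 1%N)) (P := fun l => k l != 0%N)
  (f := fun l => U_(l)%MM)) => [|l l' _ _ /eqP|l _|p]; last 3 first.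
- by rewrite eq_mnm1 => /eqP.
- by rewrite mdeg1 ltnS.
- exact: lep_mdeg1E.
by rewrite -big_mnm_supp; under eq_bigr do rewrite mbin1.
Qed.

Lemma sprod_deg1r L M d r : mdeg r = d.+1 ->
  sprod d M L r = (d.+1)%:R^-1 *: \sum_l (r l)%:R *: (M (r - U_(l)) * L U_(l))%MM.
Proof.
move=> degr; rewrite /sprod degr binSn
  (big_bmnm_reindex (fun q => (mbin r q)%:R *: (M q * L (r - q)%MM))
  (Q := fun p => (p <= r)%MM && (mdeg p == d)) (P := fun l => r l != 0%N)
  (f := fun l => r - U_(l))%MM) => [|l l' rl rl' e|l rl|p]; last 3 first.
- apply/eqP; rewrite -eq_mnm1 -(subKm (k := r) (p := U_(l)%MM)) ?lep1mP //.
  by rewrite e subKm ?lep1mP.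
- by rewrite mdegB_eq ?lep1mP // degr mdeg1 subn1.
- exact: lep_mdeg_predE.
rewrite -big_mnm_supp; congr (_ *: _); apply: eq_bigr => l rl.
by rewrite mbin_sub ?lep1mP // mbin1 subKm ?lep1mP.
Qed.

Lemma sprod_seTr M (i : 'I_n) d r : mdeg r = d.+1 ->
  sprod d M (seT K i) r = ((d.+1)%:R^-1 * (r i)%:R) *: M (r - U_(i))%MM.
Proof.
move=> degr; rewrite sprod_deg1r // (bigD1 i) //= big1 => [|l ne_li].
  by rewrite /seT eqxx mulr1 addr0 scalerA.
by rewrite /seT eq_mnm1 (negbTE ne_li) mulr0 scaler0.
Qed.

End SymProduct.

Section SymPower.
Variables (K : fieldType) (n : nat).
Hypothesis K0 : [pchar K] =i pred0.

Lemma spow1E (L : smat K n) j m : mdeg m = j ->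
  spow 1 L j m = mmap1 (fun l => L U_(l)%MM) m.
Proof.
elim: j m => [|j IH] m degm.
  by move/eqP: degm; rewrite mdeg_eq0 => /eqP ->; rewrite mmap11 /= /sunit eqxx.
rewrite /= sprod_deg1l ?degm //.
have termE l : (m l)%:R *: (L U_(l) * spow 1 L j (m - U_(l)))%MM
    = (m l)%:R *: mmap1 (fun l => L U_(l)%MM) m.
  have [->|ml] := eqVneq (m l) 0%N; first by rewrite !scale0r.
  rewrite IH ?mdegB_eq ?lep1mP ?degm ?mdeg1 ?subn1 //.
  rewrite -[X in _ = _ *: mmap1 _ X](submK (m := U_(l)%MM) (m' := m)) ?lep1mP //.
  by rewrite addmC commr_mmap1_M ?mmap1U // => ? ?; apply: mulrC.
under eq_bigr do rewrite termE.
rewrite -scaler_suml -natr_sum -mdegE degm scalerA mulVf ?scale1r //.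
by rewrite ((pcharf0P _).1 K0).
Qed.

Lemma spow_sid j m : mdeg m = j -> spow 1 (@sid K n) j m = 'X_[m].
Proof. by move/spow1E ->; rewrite mmap1_id. Qed.

Lemma sprod_spow_axis (L : smat K n) (i : 'I_n) j e p :
    (forall l, l != i -> L U_(l)%MM = 0) -> mdeg p = (j + e)%N ->
  sprod j (spow 1 L j) (spow 1 (@sid K n) e) p
  = ('C(j + e, j)%:R^-1 * 'C(p i, j)%:R) *: (L U_(i)%MM ^+ j * 'X_[p - U_(i) *+ j]).
Proof.
move=> L0 degp; rewrite /sprod degp -scalerA; congr (_ *: _).
set T := _ *: _; have degU : mdeg (U_(i) *+ j)%MM = j by rewrite mdegMn mdeg1 mul1n.
rewrite -(big_bmnm_pred1 (b := (j + e).+1) (fun _ => T) (m := (U_(i) *+ j)%MM))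
  ?degU ?ltnS ?leq_addr //.
rewrite [LHS]big_mkcond [RHS]big_mkcond; apply: eq_bigr => q _ /=.
case: ifP => [/andP[le_qp /eqP degq] | qNp].
  rewrite spow1E // spow_sid ?mdegB_eq ?degp ?degq ?addKn //.
  have [->|ne_q] := eqVneq (bmnm q) (U_(i) *+ j)%MM.
    by rewrite mbin_mulmn1 mmap1_mulmn1.
  have [l /andP[ne_li ql]|qi] := pickP (fun l => (l != i) && (q l != 0%N)).
    by rewrite (mmap1_eq0 (L0 _ ne_li) ql) mul0r scaler0.
  have qE : bmnm q = (U_(i) *+ mdeg q)%MM.
    apply: mnm_mulmn1_mdeg => l ne_li.
    by apply/eqP; move: (qi l); rewrite ne_li => /negbFE.
  by case/eqP: ne_q; rewrite {1}qE degq.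
case: eqP => // eq_q; move: qNp; rewrite eq_q degU eqxx andbT lep_mulmn1 => /negbT.
by rewrite -ltnNge /T => /bin_small ->; rewrite scale0r.
Qed.

End SymPower.

Section Filter.
Variables (K : fieldType) (n : nat) (A : nat -> smat K n) (i : 'I_n).
Hypothesis homA0 : A 0%N 0%MM \is 1.-homog.
Hypothesis Xi0_neq0 : Xi0 A i != 0.
Hypothesis K0 : [pchar K] =i pred0.

Local Notation a := (A 0%N 0%MM).
Local Notation Xi := (Xi0 A i).
Local Notation b := (Xi^-1 *: a).
Local Notation substF1 := (mmap1 (fun l => F1 A i U_(l)%MM)).

Lemma F1_mnm1 l : F1 A i U_(l)%MM = 'X_l - (if l == i then b else 0).
Proof.
rewrite /F1 /ssub /sscale /sid sprod0l /seT eq_mnm1.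
by case: eqP; rewrite ?mulr1 ?mulr0 ?scaler0.
Qed.

Lemma sid_sub_F1_mnm1 l :
  ssub (@sid K n) (F1 A i) U_(l)%MM = if l == i then b else 0.
Proof. by rewrite /ssub F1_mnm1 opprB addrC subrK. Qed.

Lemma sapply_F1_A0_eq0 : sapply (F1 A i) a = 0.
Proof.
rewrite /F1 sapply_ssub sapply_sid sapply_sscale.
rewrite (eq_in_sapply (N := fun r => a * seT K i r)) => [|r _]; last exact: sprod0l.
by rewrite sapply_mull sapply_seT -scalerAr mulr1 scalerA mulVf // scale1r subrr.
Qed.

Lemma mmap_F1_A0_eq0 : mmap (@mpolyC n K) (fun l => F1 A i U_(l)%MM) a = 0.
Proof. by rewrite -sapply_dhomog1 // sapply_F1_A0_eq0. Qed.

Lemma subr_substF1 (r : 'X_{1..n}) k : (r i <= k)%N ->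
  'X_[r] - substF1 r
  = \sum_(j < k) ('C(r i, j.+1)%:R * (-1) ^+ j) *: (b ^+ j.+1 * 'X_[r - U_(i) *+ j.+1]).
Proof.
move=> le_rk; set Y := \prod_(l < n | l != i) ('X_l : {mpoly K[n]}) ^+ r l.
have XE (s : 'X_{1..n}) : (forall l, l != i -> s l = r l) -> 'X_[s] = 'X_i ^+ s i * Y.
  move=> sr; rewrite mpolyXE_id (bigD1 i) //=; congr (_ * _).
  by apply: eq_bigr => l /sr ->.
have -> : substF1 r = ('X_i - b) ^+ r i * Y.
  rewrite /mmap1 (bigD1 i) //= F1_mnm1 eqxx; congr (_ * _).
  by apply: eq_bigr => l ne_li; rewrite F1_mnm1 (negbTE ne_li) subr0.
rewrite (XE r) // -mulrBl (exprBn_diff _ _ le_rk) mulr_suml; apply: eq_bigr => j _.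
rewrite (XE (r - U_(i) *+ j.+1)%MM) => [|l ne_li]; last first.
  by rewrite mnmBE mulmnE mnm1E eq_sym (negbTE ne_li) mul0n subn0.
rewrite mnmBE mulmnE mnm1E eqxx mul1n -!mul_mpolyC rmorphM rmorphXn rmorphN1 rmorph_nat.
by ring.
Qed.

Lemma mul_A0_Umat k (r : 'X_{1..n}) : mdeg r = k -> (0 < k)%N ->
  a * Umat A i k r = Xi *: ('X_[r] - substF1 r).
Proof.
case: k => // k degr _; rewrite /Umat /= sprod_seTr //.
have [ri0|ri_gt0] := posnP (r i).
  by rewrite (subr_substF1 (k := 0)) ri0 // big_ord0 mulr0 scale0r mulr0 scaler0.
have le_rk : (r i <= k.+1)%N by rewrite -degr mdegE (bigD1 i) //= leq_addr.
rewrite (subr_substF1 le_rk) !scaler_sumr mulr_sumr; apply: eq_bigr => j _.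
have le_jk : (j <= k)%N by rewrite -ltnS.
have degr' : mdeg (r - U_(i))%MM = (j + (k - j))%N.
  by rewrite mdegB_eq ?lep1mP -?lt0n // degr mdeg1 subn1 subnKC.
rewrite (sprod_spow_axis K0 (i := i) _ degr') => [|l ne_li]; last first.
  by rewrite sid_sub_F1_mnm1 (negbTE ne_li).
rewrite sid_sub_F1_mnm1 eqxx subnKC // mnmBE mnm1E eqxx subn1 submDA -mulmS.
have aE : a = Xi *: b by rewrite scalerA mulfV // scale1r.
rewrite {1}aE -scalerAl !scalerA -scalerAr scalerA exprS.
congr (_ *: _); last exact: mulrA.
by rewrite -(natr_bin_shift K0 le_jk ri_gt0); ring.
Qed.

Lemma sapply_Umat_A0X k (m : 'X_{1..n}) : (0 < k)%N -> mdeg m = k.-1 ->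
  sapply (Umat A i k) (a * 'X_[m]) = Xi *: 'X_[m].
Proof.
move=> k_gt0 degm.
have a_neq0 : a != 0 by apply: contraNneq Xi0_neq0 => a0; rewrite /Xi0 a0 mcoeff0.
have homAX : a * 'X_[m] \is k.-homog.
  by rewrite -(prednK k_gt0) -add1n; apply: dhomogM => //; rewrite dhomogX; exact/eqP.
apply: (mulfI a_neq0); rewrite -sapply_mull.
rewrite (eq_in_sapply (N := sscale Xi (ssub (@sid K n) substF1))); last first.
  by move=> r /(dhomog_mf homAX) degr; rewrite mul_A0_Umat.
rewrite sapply_sscale sapply_ssub sapply_sid sapply_mmap1 rmorphM /= mmap_F1_A0_eq0.
by rewrite mul0r subr0 scalerAr.
Qed.

End Filter.

Section FilterRecursion.
Variables (K : fieldType) (n : nat) (A : nat -> smat K n) (i : 'I_n).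

Lemma Fstep_ext (G G' : nat -> smat K n) k :
  (forall j, (j < k.-1)%N -> G j.+1 =1 G' j.+1) -> Fstep A i G k =1 Fstep A i G' k.
Proof.
move=> eqG m; rewrite /Fstep /sscale !smulE; congr (_ *: _).
apply: eq_in_sapply => r _; apply: eq_bigr => j _.
by congr (_ *: _); apply: eq_in_sapply => s _; apply: eqG.
Qed.

Lemma FauxS f k : Faux A i f.+1 k =
  if k == 0%N then @szero K n else if k == 1%N then F1 A i else Fstep A i (Faux A i f) k.
Proof. by []. Qed.

Lemma Faux_eq f f' k : (k <= f)%N -> (k <= f')%N -> Faux A i f k =1 Faux A i f' k.
Proof.
elim: f f' k => [|f IH] [|f'] k le_kf le_kf'.
- by [].
- by move: le_kf; rewrite leqn0 => /eqP ->.
- by move: le_kf'; rewrite leqn0 => /eqP ->.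
rewrite !FauxS; case: eqP => // k_neq0; case: eqP => // k_neq1.
apply: Fstep_ext => j; rewrite ltn_predRL => lt_jk.
by apply: IH; rewrite -ltnS (leq_trans lt_jk).
Qed.

Lemma F_rec k : (1 < k)%N -> F A i k =1 Fstep A i (F A i) k.
Proof.
case: k => [|[|k]] lt1k; [by [] | by [] | rewrite /F FauxS].
by apply: Fstep_ext => j lt_jk; apply: Faux_eq.
Qed.

End FilterRecursion.

Theorem mainTheorem2 (K : numClosedFieldType) (n : nat)
    (A : nat -> smat K n) (i : 'I_n)
    (hA : forall (j : nat) (m : 'X_{1..n}), mdeg m = j -> A j m \is 1.-homog)
    (hXi : Xi0 A i != 0) :
  forall k : nat, (1 <= k)%N ->
  forall m : 'X_{1..n}, mdeg m = k.-1 ->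
    \sum_(j < k) ('C(k.-1, j))%:R *:
       smul (F A i j.+1) (sprod (k.-1 - j)%N (A (k.-1 - j)%N) (spow 1 (@sid K n) j)) m = 0.
Proof.
have homA0 : A 0%N 0%MM \is 1.-homog by apply: hA; rewrite mdeg0.
have K0 : [pchar K] =i pred0 := pchar_num K.
case=> [//|[|k]] _ m /= degm.
  move/eqP: degm; rewrite mdeg_eq0 => /eqP ->.
  by rewrite big_ord1 bin0 scale1r smulE sprod0l /= /sunit eqxx mulr1 sapply_F1_A0_eq0.
rewrite big_ord_recr /= -[sprod 1 _ _]/(spow 1 (@sid K n) k.+1).
rewrite subnn binn scale1r smulE sprod0l spow_sid //.
rewrite (eq_in_sapply (N := Fstep A i (F A i) k.+2)) => [|r _]; last exact: F_rec.
rewrite /Fstep sapply_sscale sapply_smul sapply_Umat_A0X // linearZ /= sapplyX.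
by rewrite scalerA mulNr mulVf // scaleN1r subrr.
Qed.
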